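(* Let $(p_n)_{n \ge 1}$ be a strictly increasing sequence of prime numbers and fix $\ell \in \mathbb{N}$. Then the Puiseux monoid $\left\langle \frac{1}{p_n p_{n+\ell}} \;\middle|\; n \in \mathbb{N} \right\rangle$ is atomic.
   Context: A Puiseux monoid is an additive submonoid of $(\mathbb{Q}_{\ge 0},+)$; $\langle S \rangle$ denotes the submonoid generated by $S$. An atom of $M$ is a nonzero element $a$ such that $a = x+y$ with $x,y \in M$ forces $x=0$ or $y=0$; $M$ is atomic if every element of $M$ is a finite sum of atoms. *)

From mathcomp Require Import all_boot all_order all_algebra.
Set Implicit Arguments. Unset Strict Implicit. Unset Printing Implicit Defensive.
Import Order.TTheory GRing.Theory Num.Theory.
Local Open Scope ring_scope.

Definition gen_monoid (S : rat -> Prop) : rat -> Prop :=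
  fun x => exists s : seq rat, (forall a, a \in s -> S a) /\ x = \sum_(a <- s) a.

Definition is_atom (M : rat -> Prop) (a : rat) : Prop :=
  M a /\ a != 0 /\
  forall x y, M x -> M y -> a = x + y -> x = 0 \/ y = 0.

Definition atomic (M : rat -> Prop) : Prop :=
  forall x, M x ->
    exists s : seq rat, (forall a, a \in s -> is_atom M a) /\ x = \sum_(a <- s) a.

(* Every generator a_n = 1/(p_n p_(n+l)) is an atom.  If a_n = x + y with x, y
   nonzero, then x and y are sums of generators a_k < a_n, which forces k > n;
   such a_k have denominators prime to p_n, hence so does x + y, whereas p_n
   divides the denominator of a_n. *)

From mathcomp Require Import all_boot all_order all_algebra.
From mathcomp Require Import ring lra.
Import Order.TTheory GRing.Theory Num.Theory.
Set Implicit Arguments. Unset Strict Implicit.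
Local Open Scope ring_scope.

Lemma atomic_gen_monoid (S : rat -> Prop) :
  (forall a, S a -> is_atom (gen_monoid S) a) -> atomic (gen_monoid S).
Proof. by move=> S_atom x [s [sS ->]]; exists s; split=> // a /sS /S_atom. Qed.

Section PIntegral.
Variable q : nat.
Hypothesis q_prime : prime q.

Definition pintegral (x : rat) : Prop :=
  exists N D : nat, (0 < D)%N /\ ~~ (q %| D)%N /\ x = N%:R / D%:R.

Lemma pintegral0 : pintegral 0.
Proof.
exists 0%N, 1%N; rewrite mul0r dvdn1; split=> //; split=> //.
by apply/eqP => q1; move: (prime_gt1 q_prime); rewrite q1.
Qed.

Lemma pintegralD x y : pintegral x -> pintegral y -> pintegral (x + y).
Proof.
move=> [M [C [C0 [qC ->]]]] [N [D [D0 [qD ->]]]].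
exists (M * D + N * C)%N, (C * D)%N; split; first by rewrite muln_gt0 C0.
split; first by rewrite Euclid_dvdM // negb_or qC.
have C0' : (C%:R : rat) != 0 by rewrite pnatr_eq0 -lt0n.
have D0' : (D%:R : rat) != 0 by rewrite pnatr_eq0 -lt0n.
by rewrite natrD !natrM; field; rewrite C0' D0'.
Qed.

Lemma pintegralV_nat d : (0 < d)%N -> ~~ (q %| d)%N -> pintegral d%:R^-1.
Proof. by move=> d0 qd; exists 1%N, d; rewrite mul1r. Qed.

Lemma not_pintegralV_nat d : (0 < d)%N -> (q %| d)%N -> ~ pintegral d%:R^-1.
Proof.
move=> d0 qd [N [D [D0 [qD E]]]].
have d0' : (d%:R : rat) != 0 by rewrite pnatr_eq0 -lt0n.
have D0' : (D%:R : rat) != 0 by rewrite pnatr_eq0 -lt0n.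
have /eqP : (D%:R : rat) = (N * d)%N%:R.
  by rewrite natrM -[N%:R](divfK D0') -E mulrAC mulVf // mul1r.
by rewrite eqr_nat => /eqP DE; move: qD; rewrite DE dvdn_mull.
Qed.

End PIntegral.

Section AtomsOfGenMonoid.
Variable S : rat -> Prop.
Hypothesis S_gt0 : forall a, S a -> 0 < a.

Lemma sum_gen_ge0 s : (forall a, a \in s -> S a) -> 0 <= \sum_(a <- s) a.
Proof. by move=> sS; rewrite big_seq sumr_ge0 // => a /sS /S_gt0 /ltW. Qed.

Lemma le_gen_sum s a :
  (forall b, b \in s -> S b) -> a \in s -> a <= \sum_(b <- s) b.
Proof.
move=> sS sa; rewrite (big_rem a sa) /= lerDl sum_gen_ge0 // => b.
by move/mem_rem; apply: sS.
Qed.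

Lemma is_atom_gen_monoid (P : rat -> Prop) a :
  P 0 -> (forall x y, P x -> P y -> P (x + y)) ->
  S a -> ~ P a -> (forall b, S b -> b < a -> P b) ->
  is_atom (gen_monoid S) a.
Proof.
move=> P0 PD Sa NPa P_lt; split.
  by exists [:: a]; rewrite big_seq1; split=> // b; rewrite inE => /eqP->.
split; first by rewrite gt_eqF ?S_gt0.
move=> _ _ [s [sS ->]] [t [tS ->]] a_st.
have [s0|s_neq0] := eqVneq (\sum_(b <- s) b) 0; first by left.
have [t0|t_neq0] := eqVneq (\sum_(b <- t) b) 0; first by right.
have s_gt0 : 0 < \sum_(b <- s) b by rewrite lt0r s_neq0 sum_gen_ge0.
have t_gt0 : 0 < \sum_(b <- t) b by rewrite lt0r t_neq0 sum_gen_ge0.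
exfalso; apply: NPa.
have stS b : b \in s ++ t -> S b by rewrite mem_cat => /orP[/sS|/tS].
rewrite a_st -big_cat big_seq; apply: big_ind => // b st_b; apply: P_lt.
  exact: stS.
move: st_b; rewrite mem_cat a_st => /orP[] b_in.
  by have := le_gen_sum sS b_in; lra.
by have := le_gen_sum tS b_in; lra.
Qed.

End AtomsOfGenMonoid.

Section PrimeProductGenerators.
Variables (p : nat -> nat) (l : nat).
Hypothesis p_prime : forall n, (0 < n)%N -> prime (p n).
Hypothesis p_incr : forall n, (0 < n)%N -> (p n < p n.+1)%N.

Lemma p_gt0 n : (0 < n)%N -> (0 < p n)%N.
Proof. by move/p_prime/prime_gt0. Qed.

Lemma p_ltn i j : (0 < i)%N -> (i < j)%N -> (p i < p j)%N.
Proof.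
case: i => // i _; case: j => // j; rewrite ltnS.
by apply: (@homo_ltn _ (fun n => p n.+1) (fun x y => x < y)%N ltn_trans) => n;
  apply: p_incr.
Qed.

Lemma p_leq i j : (0 < i)%N -> (i <= j)%N -> (p i <= p j)%N.
Proof. by move=> i0; rewrite leq_eqVlt => /orP[/eqP->//|/(p_ltn i0)/ltnW]. Qed.

Let den n := (p n * p (n + l))%N.

Lemma den_gt0 n : (0 < n)%N -> (0 < den n)%N.
Proof. by move=> n0; rewrite muln_gt0 !p_gt0 // addn_gt0 n0. Qed.

Lemma lt_inv_den n k : (0 < n)%N -> (0 < k)%N ->
  (den k)%:R^-1 < (den n)%:R^-1 :> rat -> (n < k)%N.
Proof.
move=> n0 k0; rewrite ltf_pV2 ?posrE ?ltr0n ?den_gt0 // ltr_nat.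
apply: contraLR; rewrite -!leqNgt => kn.
by rewrite leq_mul ?p_leq // ?leq_add2r // addn_gt0 k0.
Qed.

Lemma pintegral_inv_den n k : (0 < n)%N -> (n < k)%N ->
  pintegral (p n) (den k)%:R^-1.
Proof.
move=> n0 nk; have k0 : (0 < k)%N by apply: leq_trans nk.
apply: pintegralV_nat; first exact: den_gt0.
have p_neq m : (n < m)%N -> (p n %| p m)%N = false.
  move=> nm; have m0 : (0 < m)%N by apply: leq_trans nm.
  by rewrite dvdn_prime2 ?p_prime // ltn_eqF ?p_ltn.
by rewrite /den Euclid_dvdM ?p_prime // !p_neq // ltn_addr.
Qed.

Lemma is_atom_inv_den n : (0 < n)%N ->
  is_atom (gen_monoid (fun q : rat =>
    exists k : nat, (0 < k)%N /\ q = (den k)%:R^-1)) (den n)%:R^-1.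
Proof.
move=> n0; apply: (@is_atom_gen_monoid _ _ (pintegral (p n))).
- by move=> _ [k [k0 ->]]; rewrite invr_gt0 ltr0n den_gt0.
- exact/pintegral0/p_prime.
- exact/pintegralD/p_prime.
- by exists n.
- by apply: not_pintegralV_nat; rewrite ?den_gt0 ?dvdn_mulr.
- move=> _ [k [k0 ->]] /(lt_inv_den n0 k0).
  exact: pintegral_inv_den.
Qed.

End PrimeProductGenerators.

Theorem proposition3p7 (p : nat -> nat) (l : nat)
  (hprime : forall n, (0 < n)%N -> prime (p n))
  (hincr : forall n, (0 < n)%N -> (p n < p n.+1)%N) :
  atomic (gen_monoid (fun q : rat =>
    exists n : nat, (0 < n)%N /\ q = ((p n * p (n + l)%N)%N%:R)^-1)).
Proof.
apply: atomic_gen_monoid => _ [n [n0 ->]].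
exact: is_atom_inv_den.
Qed.
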